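(* Suppose $x\in X$ has $\deg(x)=i<\infty$ and fix any integer $n>i$. Then for every $m\geq0$ we have $\min_{j\geq m}\deg\big(T^j(x)_n\big)\leq i+1$.
   Context: Paths and cycles: a graph is $G=(V,E)$ with $V$ finite and $E\subset V\times V$. A path is a finite sequence of vertices $(u_0,\dots,u_L)$ with $(u_j,u_{j+1})\in E$; its length is $|\cdot|=L$; a cycle is a path with $u_0=u_L$. For paths where one ends where the next starts, $+$ denotes concatenation and $a\,c$ means the cycle $c$ traversed $a$ times. Construction: $G_0=(V_0,E_0)$ with $V_0=\{v_{0,0}\}$, $E_0=\{e_{0,0}\}$, $e_{0,0}=(v_{0,0},v_{0,0})$. For $n\geq1$, $G_n=(V_n,E_n)$ consists of a vertex $v_{n,0}$, the loop $e_{n,0}=(v_{n,0},v_{n,0})$, and $n$ cycles $c_{n,1},\dots,c_{n,n}$, each starting and ending at $v_{n,0}$, whose vertices other than $v_{n,0}$ are pairwise distinct (within each cycle and across cycles); $V_n$ is the set of all these vertices and $E_n$ consists of $e_{n,0}$ and the edges of the cycles. The maps $\varphi_n\colon V_{n+1}\to V_n$ and the lengths of the cycles $c_{n+1,i}$ are defined together: $\varphi_n(v_{n+1,0})=v_{n,0}$, and for each $i$ a path $P_{n,i}$ in $G_n$ from $v_{n,0}$ to $v_{n,0}$ is given; $c_{n+1,i}$ has length $|P_{n,i}|$ and $\varphi_n$ maps its $j$-th vertex to the $j$-th vertex of $P_{n,i}$ (written $\varphi_n(c_{n+1,i})=P_{n,i}$). The paths are: $P_{0,1}=10\,e_{0,0}$;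 for $n\geq1$: $P_{n,i}=e_{n,0}+2c_{n,i}+2c_{n,i+1}+\dots+2c_{n,n}+e_{n,0}$ for $2\leq i\leq n$; $P_{n,n+1}=(n+2)^2\big(\sum_{i=1}^n|c_{n,i}|\big)\,e_{n,0}$; and $P_{n,1}=(1\,e_{n,0}+2c_{n,1})+(2\,e_{n,0}+2c_{n,1})+\dots+(k_n\,e_{n,0}+2c_{n,1})+e_{n,0}+2c_{n,2}+\dots+2c_{n,n}+e_{n,0}$, where $k_n=2\big(1+\sum_{i=1}^n|c_{n,i}|\big)$. Let $X=\{x\in\prod_{n\geq0}V_n:\varphi_n(x_{n+1})=x_n\ \forall n\}$ with metric $d(x,y)=2^{-\min\{i:x_i\neq y_i\}}$ ($d(x,x)=0$); $X$ is a compact zero-dimensional metric space, and $T\colon X\to X$ defined by $T(x)=y$ iff $(x_n,y_n)\in E_n$ for all $n$ is a well-defined homeomorphism. Write $x_n$ for the $n$-th coordinate of $x$. Degree: for $v\in V_n$, $\deg(v)=+\infty$ if $v=v_{n,0}$ and $\deg(v)=i$ if $v$ is a vertex of $c_{n,i}$ different from $v_{n,0}$; for $x\in X$, $\deg(x)=\min_n\deg(x_n)$. *)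

From mathcomp Require Import all_boot.
From Stdlib Require Import ClassicalEpsilon.
Set Implicit Arguments. Unset Strict Implicit. Unset Printing Implicit Defensive.

(* Vertices of G_n are encoded as pairs of naturals:
   (0,0)  = the distinguished vertex v_{n,0};
   (i,j)  with 1 <= i <= n, 1 <= j < |c_{n,i}| = the j-th vertex of c_{n,i}
          (its 0-th and |c_{n,i}|-th vertices being v_{n,0}). *)
Definition vtx := (nat * nat)%type.
Definition ctr : vtx := (0, 0).

(* A path from v_{n,0} to v_{n,0} is encoded by its vertex list
   (u_0, ..., u_{L-1}) with its final vertex u_L = v_{n,0} omitted, so that
   concatenation is [++] and the length is [size]. *)

(* cycle c_{n,i} given the length list L = [|c_{n,1}|; ...; |c_{n,n}|] *)
Definition clen (L : seq nat) (i : nat) : nat := nth 0 L i.-1.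
Definition cyc (L : seq nat) (i : nat) : seq vtx :=
  ctr :: [seq (i, j) | j <- iota 1 (clen L i).-1].

Definition Ppath (n : nat) (L : seq nat) (i : nat) : seq vtx :=
  if n == 0 then nseq 10 ctr
  else if i == 1 then
    flatten [seq nseq k ctr ++ cyc L 1 ++ cyc L 1 | k <- iota 1 (2 * (1 + sumn L))]
      ++ [:: ctr] ++ flatten [seq cyc L l ++ cyc L l | l <- iota 2 (n - 1)] ++ [:: ctr]
  else if i <= n then
    [:: ctr] ++ flatten [seq cyc L l ++ cyc L l | l <- iota i (n - i + 1)] ++ [:: ctr]
  else nseq ((n + 2) ^ 2 * sumn L) ctr.

(* lens n = [|c_{n,1}|; ...; |c_{n,n}|] *)
Fixpoint lens (n : nat) : seq nat :=
  match n with
  | 0 => [::]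
  | n'.+1 => [seq size (Ppath n' (lens n') i) | i <- iota 1 n]
  end.

Definition len (n i : nat) : nat := clen (lens n) i.

Definition vert (n : nat) (v : vtx) : bool :=
  (v == ctr) || [&& 1 <= v.1 <= n & 1 <= v.2 < len n v.1].

(* edge set E_n : the loop e_{n,0} and the edges of the cycles c_{n,i} *)
Definition edge (n : nat) (u v : vtx) : bool :=
  [&& vert n u, vert n v &
    [|| (u == ctr) && (v == ctr),
        (u == ctr) && (v.2 == 1),
        [&& u.1 != 0, v.1 == u.1 & v.2 == u.2 + 1]
      | [&& u.1 != 0, v == ctr & u.2 + 1 == len n u.1]]].

Definition phi (n : nat) (v : vtx) : vtx :=
  if v == ctr then ctr else nth ctr (Ppath n (lens n) v.1) v.2.

Definition inX (x : nat -> vtx) : Prop :=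
  forall n, vert n (x n) /\ phi n (x n.+1) = x n.

Definition Trel (x y : nat -> vtx) : Prop := forall n, edge n (x n) (y n).

(* the map T (well defined on X, as stated in the paper); chosen by epsilon *)
Definition T (x : nat -> vtx) : nat -> vtx :=
  epsilon (inhabits x) (fun y => inX y /\ Trel x y).

(* degree of a vertex: None = +infinity *)
Definition vdeg (v : vtx) : option nat := if v == ctr then None else Some v.1.

Definition has_deg (x : nat -> vtx) (i : nat) : Prop :=
  (exists n, vdeg (x n) = Some i) /\ (forall n k, vdeg (x n) = Some k -> i <= k).

From mathcomp Require Import all_boot zify.
From Stdlib Require Import ClassicalEpsilon.
Set Implicit Arguments. Unset Strict Implicit. Unset Printing Implicit Defensive.

(* From some level M on, x_(M+1) lies on the cycle c_(M+1,i), and x_M is a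
   vertex of degree i of P_(M,i) = phi_M(c_(M+1,i)).  Every vertex of degree i
   of P_(M,i) comes before its first traversal of c_(M,i+1), so running T along
   c_(M+1,i) brings the M-th coordinate to any vertex (i+1, q) of c_(M,i+1).
   Since P_(k,l) starts with a copy of c_(k,l) when l >= 2, the vertex
   (i+1, M-n+1) projects down to the vertex (i+1, 1) of G_n, and choosing M
   large makes the number of steps exceed m. *)

Lemma vert_ctr k : vert k ctr.
Proof. by rewrite /vert eqxx. Qed.

Lemma edge_ctr k : edge k ctr ctr.
Proof. by rewrite /edge vert_ctr eqxx. Qed.

Lemma vert_nonctr k v : vert k v -> v != ctr ->
  (1 <= v.1 <= k) /\ (1 <= v.2 < len k v.1).
Proof. by rewrite /vert => /orP[/eqP->|H]; [rewrite eqxx|move=> _; lia]. Qed.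

Lemma pair_nonctr a b : a != 0 -> (a, b) != ctr.
Proof. by rewrite /ctr xpair_eqE negb_and => ->. Qed.

Lemma vdegE v k : vdeg v = Some k <-> v != ctr /\ v.1 = k.
Proof.
by rewrite /vdeg; case: eqP => [->|_]; split=> //=; [case|case=> ->|case=> _ ->].
Qed.

(* A closed walk at [ctr] in G_k, encoded as in [Ppath] (final vertex omitted). *)
Definition closed_walk k (s : seq vtx) : bool :=
  (head ctr s == ctr) && path (edge k) ctr (rcons (behead s) ctr).

Lemma closed_walk_cat k s1 s2 :
  closed_walk k s1 -> closed_walk k s2 -> closed_walk k (s1 ++ s2).
Proof.
case: s1 => [|a s1] // /andP[/= /eqP -> H1].
case: s2 => [|b s2]; first by rewrite cats0 /closed_walk /=.
rewrite {1}/closed_walk => /andP[/= /eqP -> H2].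
rewrite /closed_walk /= rcons_cat /= cat_path.
by move: H1; rewrite rcons_path => /andP[-> He] /=; rewrite He.
Qed.

Lemma closed_walk_nseq k t : closed_walk k (nseq t ctr).
Proof.
elim: t => [|t IH] //; rewrite -[nseq _ _]cat1s.
by apply: closed_walk_cat => //; rewrite /closed_walk /= eqxx edge_ctr.
Qed.

Lemma closed_walk_flatten k (ss : seq (seq vtx)) :
  all (closed_walk k) ss -> closed_walk k (flatten ss).
Proof. by elim: ss => [|s ss IH] //= /andP[Hs /IH]; apply: closed_walk_cat. Qed.

Lemma size_lens k : size (lens k) = k.
Proof. by case: k => //= k; rewrite size_map size_iota. Qed.

Lemma len_gt0_le k l : 1 <= l -> 0 < len k l -> l <= k.
Proof.
move=> Hl; rewrite /len /clen; case: (leqP l k) => // Hk.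
by rewrite nth_default // size_lens; lia.
Qed.

Lemma closed_walk_cyc k l : 1 <= l -> closed_walk k (cyc (lens k) l).
Proof.
move=> Hl; rewrite /closed_walk /cyc /= -/(len k l).
case E: (len k l) => [|[|c]] //=.
have Hlk : l <= k by apply: len_gt0_le; rewrite ?E.
apply/andP; split; first by rewrite /edge /vert /ctr !xpair_eqE /= E; lia.
have Htail b d : 1 <= b -> b + d + 1 = len k l ->
    path (edge k) (l, b) (rcons [seq (l, j) | j <- iota b.+1 d] ctr).
  elim: d b => [|d IH] b Hb Hlen /=.
    by rewrite andbT /edge /vert /ctr !xpair_eqE /=; lia.
  by apply/andP; split; [rewrite /edge /vert /ctr !xpair_eqE /=; lia|apply: IH; lia].
by apply: Htail; lia.
Qed.

Definition ladder (L : seq nat) (a b : nat) : seq vtx :=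
  flatten [seq cyc L l ++ cyc L l | l <- iota a b].

Lemma ladderS L a b : ladder L a b.+1 = cyc L a ++ cyc L a ++ ladder L a.+1 b.
Proof. by rewrite /ladder /= -catA. Qed.

Lemma ladder_split L a b l : a <= l < a + b ->
  ladder L a b = ladder L a (l - a) ++ cyc L l ++ cyc L l ++ ladder L l.+1 (a + b - l.+1).
Proof.
move=> Hl; rewrite /ladder {1}(_ : b = l - a + (a + b - l.+1).+1); last by lia.
by rewrite iotaD map_cat flatten_cat subnKC /= -?catA //; lia.
Qed.

Lemma closed_walk_ladder k a b : 1 <= a -> closed_walk k (ladder (lens k) a b).
Proof.
move=> Ha; apply/closed_walk_flatten/allP => s /mapP[j]; rewrite mem_iota => Hj ->.
by apply: closed_walk_cat; apply: closed_walk_cyc; lia.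
Qed.

Lemma Ppath_ge2 k l : 2 <= l <= k ->
  Ppath k (lens k) l = ctr :: ladder (lens k) l (k - l).+1 ++ [:: ctr].
Proof.
move=> Hl; rewrite /Ppath ifF; last by apply/eqP; lia.
by rewrite ifF ?ifT ?addn1 //; [lia|apply/eqP; lia].
Qed.

Lemma Ppath_1 k : 0 < k -> exists A,
  Ppath k (lens k) 1 = A ++ ladder (lens k) 2 k.-1 ++ [:: ctr] /\ closed_walk k A.
Proof.
move=> Hk; rewrite /Ppath ifF; last by apply/eqP; lia.
rewrite subn1 catA; eexists; split; first by [].
apply: closed_walk_cat; last exact: (closed_walk_nseq k 1).
apply/closed_walk_flatten/allP => s /mapP[j _ ->].
by rewrite !closed_walk_cat ?closed_walk_nseq ?closed_walk_cyc.
Qed.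

Lemma Ppath_beyond k l : 1 < l -> k < l -> exists t, Ppath k (lens k) l = nseq t ctr.
Proof.
move=> Hl Hkl; rewrite /Ppath; case: eqP => _; first by exists 10.
by rewrite ifF ?ifF; [eexists|lia|apply/eqP; lia].
Qed.

Lemma closed_walk_Ppath k l : 1 <= l -> closed_walk k (Ppath k (lens k) l).
Proof.
move=> Hl; have Hctr : closed_walk k [:: ctr] := closed_walk_nseq k 1.
case: (ltngtP l 1) => [|Hl2|->]; first by lia.
  case: (leqP l k) => Hlk; last first.
    by have [t ->] := Ppath_beyond Hl2 Hlk; apply: closed_walk_nseq.
  have Hl2k : 2 <= l <= k by lia.
  rewrite (Ppath_ge2 Hl2k) -[_ :: _]cat1s.
  apply: closed_walk_cat => //; apply: closed_walk_cat => //.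
  by apply: closed_walk_ladder; lia.
case: (posnP k) => [->|Hk]; first exact: closed_walk_nseq.
have [A [-> HA]] := Ppath_1 Hk.
by apply: closed_walk_cat => //; apply: closed_walk_cat => //; apply: closed_walk_ladder.
Qed.

Lemma closed_walk_head k s : closed_walk k s -> nth ctr s 0 = ctr.
Proof. by case: s => [|a s] // /andP[/= /eqP]. Qed.

Lemma closed_walk_edge k s b :
  closed_walk k s -> b < size s -> edge k (nth ctr s b) (nth ctr s b.+1).
Proof.
have nth_rcons_ctr (t : seq vtx) c : nth ctr (rcons t ctr) c = nth ctr t c.
  by rewrite nth_rcons; case: ltnP => // H; rewrite nth_default //; case: eqP.
case: s => [|a s] // /andP[/= /eqP -> /(pathP ctr) Hp] Hb.
by have := Hp b; rewrite size_rcons -rcons_cons !nth_rcons_ctr; apply.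
Qed.

Lemma closed_walk_vert k s v : closed_walk k s -> v \in s -> vert k v.
Proof. by move=> Hw /(nthP ctr)[b Hb <-]; case/and3P: (closed_walk_edge Hw Hb). Qed.

Lemma len_Ppath k l : 1 <= l <= k.+1 -> len k.+1 l = size (Ppath k (lens k) l).
Proof.
move=> Hl; rewrite /len /clen.
have -> : lens k.+1 = [seq size (Ppath k (lens k) i) | i <- iota 1 k.+1] by [].
by rewrite (nth_map 0) ?size_iota ?nth_iota ?add1n ?prednK //; lia.
Qed.

Lemma size_Ppath_ge2 k l : 2 <= size (Ppath k (lens k) l).
Proof.
rewrite /Ppath; case: eqP => [_|/eqP Hk]; first by rewrite size_nseq.
case: eqP => _; first by rewrite !size_cat /=; lia.
case: ifP => _; first by rewrite !size_cat /=; lia.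
rewrite size_nseq; case: k Hk => [//|k] _.
have : 0 < size (Ppath k (lens k) 1).
  by rewrite /Ppath; case: eqP => _; rewrite ?size_nseq // !size_cat /=; lia.
by rewrite /= -/(sumn _); move: (sumn _) => s Hs; nia.
Qed.

Lemma len_ge2 k l : 1 <= l <= k -> 2 <= len k l.
Proof. by case: k => [|k] Hl; [lia|rewrite len_Ppath ?size_Ppath_ge2]. Qed.

Lemma phi_ctr k : phi k ctr = ctr.
Proof. by rewrite /phi eqxx. Qed.

Lemma phi_pair k a b : a != 0 -> phi k (a, b) = nth ctr (Ppath k (lens k) a) b.
Proof. by move=> Ha; rewrite /phi /ctr xpair_eqE (negbTE Ha). Qed.

(* Every edge of G_(k+1) is the loop or joins consecutive vertices of some c_(k+1,a),
   and phi_k maps these to consecutive vertices of the closed walk P_(k,a). *)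
Lemma edge_phi k u v : edge k.+1 u v -> edge k (phi k u) (phi k v).
Proof.
case: u v => [a b] [c d] /and3P[Hu Hv]; case/or4P.
- by case/andP => /eqP -> /eqP ->; rewrite phi_ctr edge_ctr.
- case/andP => /eqP -> /= /eqP Hd; subst d.
  have Hc1ctr : (c, 1) != ctr by rewrite /ctr xpair_eqE andbF.
  have /= [Hc1 Hc2] := vert_nonctr Hv Hc1ctr.
  have Hc : c != 0 by lia.
  have Hw := closed_walk_Ppath k (proj1 (andP Hc1)).
  rewrite phi_ctr phi_pair // -{1}(closed_walk_head Hw).
  by apply: closed_walk_edge Hw _; rewrite -len_Ppath; lia.
- case/and3P => /= Ha /eqP Hc /eqP Hd; subst c d.
  have /= [Ha1 Ha2] := vert_nonctr Hu (pair_nonctr b Ha).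
  rewrite !phi_pair // addn1; apply: closed_walk_edge.
    by apply: closed_walk_Ppath; lia.
  by rewrite -len_Ppath; lia.
- case/and3P => /= Ha /eqP -> /eqP Hb.
  have /= [Ha1 Ha2] := vert_nonctr Hu (pair_nonctr b Ha).
  have Hw := closed_walk_Ppath k (proj1 (andP Ha1)).
  have Hbs : b < size (Ppath k (lens k) a) by rewrite -len_Ppath; lia.
  rewrite phi_ctr phi_pair //; have := closed_walk_edge Hw Hbs.
  by rewrite [nth _ _ b.+1]nth_default // -len_Ppath; lia.
Qed.

Definition succ k (u : vtx) : vtx :=
  if u.2.+1 < len k u.1 then (u.1, u.2.+1) else ctr.

Lemma edge_succ k u : vert k u -> u != ctr -> edge k u (succ k u).
Proof.
case: u => a b; rewrite /succ /=.
by case: ifP; rewrite /edge /vert /ctr !xpair_eqE /=; lia.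
Qed.

Lemma edge_eq_succ k u v : edge k u v -> u != ctr -> v = succ k u.
Proof.
case: u v => [a b] [c d] /and3P[_ Hv He] Hu; rewrite /succ /=.
case/or4P: He; try by move: Hu; rewrite /ctr !xpair_eqE /=; lia.
  case/and3P => /= _ /eqP Hc /eqP Hd; subst c d; case: ifP; first by rewrite addn1.
  by move: Hv; rewrite /vert /ctr !xpair_eqE /=; lia.
by case/and3P => /= _ /eqP -> Hb; case: ifP => //; lia.
Qed.

Fixpoint phis (t m : nat) (v : vtx) : vtx :=
  if t is t'.+1 then phi m (phis t' m.+1 v) else v.

Lemma phisS t m v : phis t.+1 m v = phis t m (phi (m + t) v).
Proof.
elim: t m => [|t IH] m; first by rewrite addn0.
by rewrite -[phis t.+2 m v]/(phi m (phis t.+1 m.+1 v)) IH addSnnS.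
Qed.

Lemma phis_inX x t m : inX x -> phis t m (x (m + t)) = x m.
Proof.
move=> Hx; elim: t m => [|t IH] m; first by rewrite addn0.
by rewrite /= -addSnnS IH (proj2 (Hx m)).
Qed.

Lemma edge_phis t m u v : edge (m + t) u v -> edge m (phis t m u) (phis t m v).
Proof.
elim: t m => [|t IH] m; first by rewrite addn0.
by rewrite -addSnnS => /IH /edge_phi.
Qed.

Lemma inX_nonctr x N l : inX x -> x N != ctr -> N <= l -> x l != ctr.
Proof.
move=> Hx HN /subnKC <-; elim: (l - N) => [|d IH]; first by rewrite addn0.
by apply: contra IH; rewrite -(proj2 (Hx (N + d))) addnS => /eqP ->; rewrite phi_ctr.
Qed.

(* Either x is constantly [ctr], or x_l != ctr for all l >= N; then y_m is the
   projection to level m of the successor of x_(m+N). *)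
Lemma Trel_exists x : inX x -> exists y, inX y /\ Trel x y.
Proof.
move=> Hx; have [[N HN]|Hctr] := classic (exists N, x N != ctr); last first.
  exists x; split=> // n.
  have -> : x n = ctr by apply/eqP/negPn/negP => H; apply: Hctr; exists n.
  exact: edge_ctr.
pose z l := succ l (x l).
have Hz l : N <= l -> edge l (x l) (z l).
  by move=> Hl; apply: edge_succ (proj1 (Hx l)) (inX_nonctr Hx HN Hl).
have Hphiz l : N <= l -> phi l (z l.+1) = z l.
  move=> Hl; have := edge_phi (Hz l.+1 (leqW Hl)); rewrite (proj2 (Hx l)).
  by move/edge_eq_succ; apply; apply: inX_nonctr Hx HN Hl.
have Hedge m : edge m (x m) (phis N m (z (m + N))).
  by rewrite -{1}(phis_inX N m Hx); apply/edge_phis/Hz; rewrite leq_addl.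
exists (fun m => phis N m (z (m + N))); split=> // m; split.
  by case/and3P: (Hedge m).
change (phis N.+1 m (z (m.+1 + N)) = phis N m (z (m + N))).
by rewrite phisS addSn Hphiz // leq_addl.
Qed.

Lemma T_spec x : inX x -> inX (T x) /\ Trel x (T x).
Proof. by move=> /Trel_exists; apply: epsilon_spec. Qed.

Lemma iter_inX x j : inX x -> inX (iter j T x).
Proof. by move=> Hx; elim: j => [|j IH] //=; case: (T_spec IH). Qed.

Lemma mem_cyc L l v : v \in cyc L l -> v != ctr -> v.1 = l.
Proof. by rewrite inE => /orP[/eqP ->|/mapP[j _ ->]] //; rewrite eqxx. Qed.

Lemma mem_ladder L a b v : v \in ladder L a b -> v != ctr -> a <= v.1.
Proof.
case/flattenP => s /mapP[l]; rewrite mem_iota => Hl -> Hv Hn.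
by move: Hv; rewrite mem_cat orbb => /mem_cyc /(_ Hn) ->; lia.
Qed.

Lemma mem_Ppath k l v : 1 <= l -> v \in Ppath k (lens k) l -> v != ctr -> l <= v.1.
Proof.
move=> Hl Hv Hn; have Hvert := closed_walk_vert (closed_walk_Ppath k Hl) Hv.
have [/andP[Hv1 _] _] := vert_nonctr Hvert Hn.
case: (ltngtP l 1) => [|Hl2|->] //; first by lia.
case: (leqP l k) => Hlk; last first.
  by move: Hv; have [t ->] := Ppath_beyond Hl2 Hlk; rewrite mem_nseq (negbTE Hn) andbF.
have Hl2k : 2 <= l <= k by lia.
move: Hv; rewrite (Ppath_ge2 Hl2k) inE (negbTE Hn) mem_cat mem_seq1 (negbTE Hn) orbF.
by move/mem_ladder; apply.
Qed.

Lemma inX_deg_step x k : inX x -> x k != ctr -> (x k.+1).1 <= (x k).1.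
Proof.
move=> Hx Hk; have HkS := inX_nonctr Hx Hk (leqnSn k).
have [Hl Hb] := vert_nonctr (proj1 (Hx k.+1)) HkS.
apply: mem_Ppath (proj1 (andP Hl)) _ Hk; rewrite -(proj2 (Hx k)) /phi (negbTE HkS).
by apply: mem_nth; rewrite -len_Ppath; lia.
Qed.

Lemma deg_eventually x i : inX x -> has_deg x i ->
  exists N, forall l, N <= l -> x l != ctr /\ (x l).1 = i.
Proof.
move=> Hx [[N /vdegE[HN HNi]] Hmin]; exists N => l Hl.
have Hnl := inX_nonctr Hx HN Hl; split=> //.
have : i <= (x l).1 by apply: (Hmin l); apply/vdegE.
suff : (x l).1 <= i by lia.
rewrite -HNi -(subnKC Hl); elim: (l - N) => [|d IH]; first by rewrite addn0.
rewrite addnS; apply: leq_trans IH; apply: (inX_deg_step Hx).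
exact: (inX_nonctr Hx HN (leq_addr _ _)).
Qed.

Lemma iter_T_cycle x k a b j : inX x -> x k = (a, b) -> a != 0 -> b + j < len k a ->
  iter j T x k = (a, b + j).
Proof.
move=> Hx Hk Ha; elim: j => [|j IH] Hj; first by rewrite addn0.
have Hedge := proj2 (T_spec (iter_inX j Hx)) k; rewrite IH in Hedge; last by lia.
rewrite /= (edge_eq_succ Hedge (pair_nonctr _ Ha)) /succ /= ifT; last by lia.
by rewrite addnS.
Qed.

Lemma nth_cat_tail (s1 s2 : seq vtx) b :
  size s1 <= b -> nth ctr (s1 ++ s2) b != ctr -> nth ctr (s1 ++ s2) b \in s2.
Proof.
rewrite nth_cat ltnNge => -> /=.
by case: (ltnP (b - size s1) (size s2)) => [/mem_nth //|Hb]; rewrite nth_default ?eqxx.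
Qed.

Lemma Ppath_split M i : 1 <= i < M -> exists A R,
  Ppath M (lens M) i = A ++ cyc (lens M) i.+1 ++ R /\
  forall v, v \in cyc (lens M) i.+1 ++ R -> v != ctr -> i < v.1.
Proof.
move=> Hi; have [A [a [b [Hab ->]]]] : exists A a b,
    a <= i.+1 < a + b /\ Ppath M (lens M) i = A ++ ladder (lens M) a b ++ [:: ctr].
  case: (ltngtP i 1) => [|Hi2|Ei]; first by lia.
    have Hi2M : 2 <= i <= M by lia.
    by exists [:: ctr], i, (M - i).+1; rewrite (Ppath_ge2 Hi2M); split; [lia|].
  have HM : 0 < M by lia.
  have [A [HA _]] := Ppath_1 HM.
  by exists A, 2, M.-1; rewrite Ei HA; split; [lia|].
rewrite (ladder_split _ Hab).
exists (A ++ ladder (lens M) a (i.+1 - a)).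
exists (cyc (lens M) i.+1 ++ ladder (lens M) i.+2 (a + b - i.+2) ++ [:: ctr]).
split; first by rewrite -!catA.
move=> v; rewrite !mem_cat mem_seq1 => /or4P[] Hv Hn.
- by rewrite (mem_cyc Hv Hn).
- by rewrite (mem_cyc Hv Hn).
- by have := mem_ladder Hv Hn; lia.
- by rewrite Hv in Hn.
Qed.

Lemma size_cyc L l : size (cyc L l) = (clen L l).-1.+1.
Proof. by rewrite /= size_map size_iota. Qed.

Lemma nth_cyc L l q : 1 <= q < clen L l -> nth ctr (cyc L l) q = (l, q).
Proof.
case: q => [|q] // Hq; rewrite /= (nth_map 0) ?size_iota; last by lia.
by rewrite nth_iota ?add1n //; lia.
Qed.

(* For 2 <= l <= k, P_(k,l) starts with a copy of c_(k,l) right after [ctr]. *)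
Lemma phi_cyc_shift k l q : 2 <= l <= k -> 1 <= q < len k l -> phi k (l, q.+1) = (l, q).
Proof.
move=> Hl Hq; rewrite phi_pair; last by lia.
set c := cyc (lens k) l; rewrite (Ppath_ge2 Hl) ladderS -/c.
change (nth ctr ((c ++ c ++ ladder (lens k) l.+1 (k - l)) ++ [:: ctr]) q = (l, q)).
rewrite -catA nth_cat size_cyc ifT ?nth_cyc //.
all: by rewrite -/(len k l); lia.
Qed.

Lemma len_ltS k l : 2 <= l <= k -> len k l < len k.+1 l.
Proof.
move=> Hl; rewrite len_Ppath; last by lia.
have := size_cyc (lens k) l; set c := cyc (lens k) l => Hc.
rewrite (Ppath_ge2 Hl) ladderS -/c.
change (len k l < (size ((c ++ c ++ ladder (lens k) l.+1 (k - l)) ++ [:: ctr])).+1).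
by rewrite !size_cat Hc -/(len k l); lia.
Qed.

Lemma len_gt_level n l t : 2 <= l <= n -> t.+1 < len (n + t) l.
Proof.
move=> Hl; elim: t => [|t IH]; first by rewrite addn0; apply: len_ge2; lia.
by rewrite addnS; apply: leq_ltn_trans IH (len_ltS _); lia.
Qed.

Lemma phis_cyc n l t : 2 <= l <= n -> phis t n (l, t.+1) = (l, 1).
Proof.
move=> Hl; elim: t => [|t IH] //; rewrite phisS phi_cyc_shift ?IH //; first by lia.
by have := len_gt_level t Hl; lia.
Qed.

Lemma reach_next_cycle x M i a q : inX x -> 1 <= i < M ->
  x M.+1 = (i, a) -> x M != ctr -> (x M).1 = i -> 1 <= q < len M i.+1 ->
  exists2 j, q <= j & iter j T x M = (i.+1, q).
Proof.
move=> Hx HiM Ha HM HMi Hq; have Hi0 : i != 0 by lia.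
have [A [R [HP Hdeg]]] := Ppath_split HiM; set c := cyc (lens M) i.+1 in HP Hdeg.
have HxM : x M = nth ctr (A ++ c ++ R) a by rewrite -HP -(proj2 (Hx M)) Ha phi_pair.
have HaA : a < size A.
  rewrite ltnNge; apply/negP => HAa; rewrite HxM in HM HMi.
  by have := Hdeg _ (nth_cat_tail HAa HM) HM; rewrite HMi ltnn.
have Hqc : q < size c by rewrite size_cyc -/(len M i.+1); lia.
have Hlen : a + (size A + q - a) < len M.+1 i.
  by rewrite len_Ppath ?HP ?size_cat; lia.
exists (size A + q - a); first by lia.
rewrite -(proj2 (iter_inX _ Hx M)) (iter_T_cycle Hx Ha Hi0 Hlen) phi_pair // HP.
rewrite subnKC; last by lia.
by rewrite nth_cat ltnNge leq_addr addKn nth_cat Hqc nth_cyc -?/(len M i.+1).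
Qed.

Theorem lemma3p9 (x : nat -> vtx) (i n : nat) :
  inX x -> has_deg x i -> i < n ->
  forall m : nat, exists j : nat, m <= j /\
    exists k : nat, vdeg (iter j T x n) = Some k /\ k <= i.+1.
Proof.
move=> Hx Hdeg Hin m.
have [N HN] := deg_eventually Hx Hdeg.
set t := m + N; set M := n + t.
have [HM HMi] : x M != ctr /\ (x M).1 = i by apply: HN; lia.
have [_ HM1i] : x M.+1 != ctr /\ (x M.+1).1 = i by apply: HN; lia.
have Hi : 1 <= i by have := vert_nonctr (proj1 (Hx M)) HM; lia.
have Hil : 2 <= i.+1 <= n by lia.
case Ea: (x M.+1) HM1i => [i' a] /= Ei'; subst i'.
have HiM : 1 <= i < M by lia.
have Hq : 1 <= t.+1 < len M i.+1 by rewrite len_gt_level.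
have [j Htj Hj] := reach_next_cycle Hx HiM Ea HM HMi Hq.
exists j; split; first by lia.
exists i.+1; split=> //; apply/vdegE.
by rewrite -(phis_inX t n (iter_inX j Hx)) Hj phis_cyc.
Qed.
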